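(* Consider the online block packing problem with $m$ resources of capacities $B_1,\dots,B_m>0$, and let $x^*=\{x_i^{*t}\}$ be the allocation produced by the greedy fractional algorithm. For every horizon $T\ge 1$ and every (possibly fractional) allocation $y=\{y_i^t\}$ (in particular the optimal offline one), $SW_{[1:T]}(x^* )\ge \tfrac12\, SW_{[1:T]}(y)$.
   Context: Online block packing: there are $m$ resources with block capacities $B_1,\dots,B_m>0$. A set $\mathcal{C}$ of transactions is given; each $i\in\mathcal{C}$ has an arrival time $a_i\in\{1,2,\dots\}$, base value $v_i\ge 0$, discount factor $\rho_i\in[0,1]$ and demand vector $w_i=(w_{i1},\dots,w_{im})\in\mathbb{R}_+^m$. Executing $i$ in block $t\ge a_i$ yields value $v_i^t:=v_i(1-\rho_i)^{t-a_i}$. A (fractional) allocation is a family $x=\{x_i^t\}_{i\in\mathcal{C},t\ge1}$ with $x_i^t\in[0,1]$, $x_i^t=0$ whenever $t<a_i$, $\sum_t x_i^t\le 1$ for all $i$, and $\sum_i w_{ij}x_i^t\le B_j$ for all blocks $t$ and resources $j$; it is integral if all $x_i^t\in\{0,1\}$. Its social welfare up to horizon $T$ is $SW_{[1:T]}(x)=\sum_{t=1}^T\sum_i x_i^t v_i^t$. The greedy fractional algorithm: at each time $t=1,2,\dots$ it sets $\{x_i^{*t}\}_i$ to be an optimal solution of the linear program maximizing $\sum_i x_i^{*t} v_i^t$ subject to $0\le x_i^{*t}\le 1-\sum_{\tau<t}x_i^{*\tau}$ for all $i$, $\sum_i w_{ij}x_i^{*t}\le B_j$ for all $j$, and $x_i^{*t}=0$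 for all $i$ with $a_i>t$. *)

From mathcomp Require Import all_boot all_order all_algebra.
Set Implicit Arguments. Unset Strict Implicit. Unset Printing Implicit Defensive.
Import Order.TTheory GRing.Theory Num.Theory.
Local Open Scope ring_scope.

(* Transactions are indexed by a finite type I, resources by 'I_m.
   Time t : nat; blocks are t = 1, 2, ...  (a i >= 1 ensures nothing is
   scheduled at t = 0). *)

(* value of executing i in block t (used only for t >= a i) *)
Definition val_at (R : realFieldType) (I : finType) (a : I -> nat) (v rho : I -> R)
  (i : I) (t : nat) : R := v i * (1 - rho i) ^+ (t - a i).

Definition is_allocation (R : realFieldType) (I : finType) (m : nat)
  (B : 'I_m -> R) (a : I -> nat) (w : I -> 'I_m -> R) (x : I -> nat -> R) : Prop :=
  [/\ (forall i t, 0 <= x i t <= 1),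
      (forall i t, (t < a i)%N -> x i t = 0),
      (forall i N, \sum_(t < N) x i t <= 1) &
      (forall t j, (1 <= t)%N -> \sum_(i : I) w i j * x i t <= B j)].

Definition SW (R : realFieldType) (I : finType) (a : I -> nat) (v rho : I -> R)
  (T : nat) (x : I -> nat -> R) : R :=
  \sum_(1 <= t < T.+1) \sum_(i : I) x i t * val_at a v rho i t.

Definition greedy_feasible (R : realFieldType) (I : finType) (m : nat)
  (B : 'I_m -> R) (a : I -> nat) (w : I -> 'I_m -> R) (xs : I -> nat -> R)
  (t : nat) (z : I -> R) : Prop :=
  [/\ (forall i, 0 <= z i <= 1 - \sum_(1 <= tau < t) xs i tau),
      (forall j, \sum_(i : I) w i j * z i <= B j) &
      (forall i, (t < a i)%N -> z i = 0)].

Definition is_greedy (R : realFieldType) (I : finType) (m : nat)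
  (B : 'I_m -> R) (a : I -> nat) (v rho : I -> R) (w : I -> 'I_m -> R)
  (xs : I -> nat -> R) : Prop :=
  forall t, (1 <= t)%N ->
    greedy_feasible B a w xs t (fun i => xs i t) /\
    (forall z, greedy_feasible B a w xs t z ->
       \sum_(i : I) z i * val_at a v rho i t <=
       \sum_(i : I) xs i t * val_at a v rho i t).

(* Split the amount y_i^t of an allocation y into the part
   min(y_i^t, 1 - sum_{tau<t} x^*_i^tau) that the greedy LP of block t could
   still have taken, and the excess.  The truncated allocation is feasible for
   the greedy LP, so block by block it is worth at most what greedy collects.
   The excess of i can only appear once greedy has already executed that much
   of i, and earlier, since values only decay: by an Abel summation it is
   worth at most greedy's welfare on i.  Summing, SW(y) is at most twice greedy's. *)
From mathcomp Require Import all_boot all_order all_algebra.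
From mathcomp Require Import lra.
Set Implicit Arguments. Unset Strict Implicit. Unset Printing Implicit Defensive.
Import Order.TTheory GRing.Theory Num.Theory.
Local Open Scope ring_scope.

Lemma sum_mul_nonincreasing_ge0 (R : realFieldType) (d v : nat -> R) n :
  (forall k, 0 <= \sum_(1 <= t < k.+1) d t) ->
  (forall t, 0 <= v t) -> (forall t, v t.+1 <= v t) ->
  0 <= \sum_(1 <= t < n.+1) d t * v t.
Proof.
move=> hd hv hvS.
have partial_le k :
    (\sum_(1 <= t < k.+1) d t) * v k <= \sum_(1 <= t < k.+1) d t * v t.
  elim: k => [|k IH]; first by rewrite !big_geq // mul0r.
  rewrite !(big_nat_recr k.+1) //= mulrDl lerD2r.
  exact: le_trans (ler_wpM2l (hd k) (hvS k)) IH.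
exact: le_trans (mulr_ge0 (hd n) (hv n)) (partial_le n).
Qed.

Section Excess.

Variables (R : realFieldType) (x y : nat -> R).

Definition residual t := 1 - \sum_(1 <= tau < t) x tau.
Definition truncated t := Num.min (y t) (residual t).
Definition excess t := y t - truncated t.

Hypotheses (x_ge0 : forall t, 0 <= x t.+1) (y_ge0 : forall t, 0 <= y t.+1)
  (y_sum_le1 : forall n, \sum_(1 <= t < n.+1) y t <= 1)
  (residual_ge0 : forall t, 0 <= residual t).

Lemma excess_sum_le n :
  \sum_(1 <= t < n.+1) excess t <= \sum_(1 <= t < n.+1) x t /\
  \sum_(1 <= t < n.+1) excess t <= \sum_(1 <= t < n.+1) y t.
Proof.
elim: n => [|n [IHx IHy]]; first by rewrite !big_geq.
rewrite !(big_nat_recr n.+1) //=.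
have := y_sum_le1 n.+1; rewrite big_nat_recr //= => hY.
have := residual_ge0 n.+1; have := x_ge0 n; have := y_ge0 n.
rewrite /excess /truncated /residual.
by case: (lerP (y n.+1) (1 - _)) => _; lra.
Qed.

Lemma excess_value_le (v : nat -> R) n :
  (forall t, 0 <= v t) -> (forall t, v t.+1 <= v t) ->
  \sum_(1 <= t < n.+1) excess t * v t <= \sum_(1 <= t < n.+1) x t * v t.
Proof.
move=> hv hvS; rewrite -subr_ge0 -sumrB.
under eq_bigr do rewrite -mulrBl.
apply: sum_mul_nonincreasing_ge0 => // k.
by rewrite sumrB subr_ge0; case: (excess_sum_le k).
Qed.

End Excess.

Section Values.

Variables (R : realFieldType) (I : finType) (a : I -> nat) (v rho : I -> R).
Hypotheses (v_ge0 : forall i, 0 <= v i) (rho01 : forall i, 0 <= rho i <= 1).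

Lemma val_at_ge0 i t : 0 <= val_at a v rho i t.
Proof.
have /andP[_ rho_le1] := rho01 i.
by rewrite mulr_ge0 // exprn_ge0 // subr_ge0.
Qed.

Lemma val_at_nonincreasing i t : val_at a v rho i t.+1 <= val_at a v rho i t.
Proof.
have /andP[rho_ge0 rho_le1] := rho01 i.
rewrite ler_wpM2l // ler_wiXn2l ?leq_sub2r //; lra.
Qed.

Lemma SW_add T (x z : I -> nat -> R) :
  SW a v rho T (fun i t => x i t + z i t) = SW a v rho T x + SW a v rho T z.
Proof.
rewrite /SW -big_split; apply: eq_bigr => t _.
by rewrite -big_split; apply: eq_bigr => i _; rewrite mulrDl.
Qed.

Lemma SW_exchange T (x : I -> nat -> R) :
  SW a v rho T x = \sum_(i : I) \sum_(1 <= t < T.+1) x i t * val_at a v rho i t.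
Proof. exact: exchange_big. Qed.

End Values.

Section Allocations.

Variables (R : realFieldType) (I : finType) (m : nat) (B : 'I_m -> R)
  (a : I -> nat) (w : I -> 'I_m -> R) (y : I -> nat -> R).
Hypothesis y_alloc : is_allocation B a w y.

Lemma allocation_ge0 i t : 0 <= y i t.
Proof. by case: y_alloc => y01 _ _ _; case/andP: (y01 i t). Qed.

Lemma allocation_sum_le1 i n : \sum_(1 <= t < n.+1) y i t <= 1.
Proof.
case: y_alloc => _ _ y_sum _; apply: le_trans (y_sum i n.+1).
by rewrite -(big_mkord xpredT) big_ltn // lerDr allocation_ge0.
Qed.

End Allocations.

Section Greedy.

Variables (R : realFieldType) (I : finType) (m : nat) (B : 'I_m -> R)
  (a : I -> nat) (v rho : I -> R) (w : I -> 'I_m -> R) (xs : I -> nat -> R).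
Hypothesis xs_greedy : is_greedy B a v rho w xs.

Lemma greedy_ge0 i t : 0 <= xs i t.+1.
Proof. by have [[bounds _ _] _] := xs_greedy (ltn0Sn t); case/andP: (bounds i). Qed.

Lemma greedy_residual_ge0 i t : 0 <= residual (xs i) t.
Proof.
case: t => [|[|t]]; try by rewrite /residual big_geq ?subr0.
have [[bounds _ _] _] := xs_greedy (ltn0Sn t); case/andP: (bounds i) => _ x_le.
rewrite /residual (big_nat_recr t.+1) //=; lra.
Qed.

Hypothesis w_ge0 : forall i j, 0 <= w i j.

Lemma truncated_greedy_feasible (y : I -> nat -> R) t :
  is_allocation B a w y -> (1 <= t)%N ->
  greedy_feasible B a w xs t (fun i => truncated (xs i) (y i) t).
Proof.
move=> y_alloc t_ge1; have y_ge0 := allocation_ge0 y_alloc.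
have [_ y_early _ y_cap] := y_alloc.
split=> [i | j | i early].
- by rewrite le_min y_ge0 greedy_residual_ge0 ge_min lexx orbT.
- apply: le_trans (y_cap t j t_ge1); apply: ler_sum => i _.
  by rewrite ler_wpM2l // ge_min lexx.
- by rewrite /truncated y_early // min_l // greedy_residual_ge0.
Qed.

End Greedy.

Theorem theorem1 (R : realFieldType) (I : finType) (m : nat)
  (B : 'I_m -> R) (a : I -> nat) (v rho : I -> R) (w : I -> 'I_m -> R)
  (hB : forall j, 0 < B j)
  (ha : forall i, (1 <= a i)%N)
  (hv : forall i, 0 <= v i)
  (hrho : forall i, 0 <= rho i <= 1)
  (hw : forall i j, 0 <= w i j)
  (xs : I -> nat -> R)
  (hgreedy : is_greedy B a v rho w xs)
  (T : nat) (hT : (1 <= T)%N)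
  (y : I -> nat -> R)
  (hy : is_allocation B a w y) :
  SW a v rho T xs >= 2^-1 * SW a v rho T y.
Proof.
set trunc := fun i t => truncated (xs i) (y i) t.
set exc := fun i t => excess (xs i) (y i) t.
have -> : SW a v rho T y = SW a v rho T trunc + SW a v rho T exc.
  by rewrite -SW_add; apply: eq_bigr => t _; apply: eq_bigr => i _; rewrite subrKC.
have trunc_le : SW a v rho T trunc <= SW a v rho T xs.
  apply: ler_sum_nat => t /andP[t_ge1 _].
  exact: (hgreedy t t_ge1).2 (truncated_greedy_feasible hgreedy hw hy t_ge1).
have exc_le : SW a v rho T exc <= SW a v rho T xs.
  rewrite !SW_exchange; apply: ler_sum => i _.
  exact: (excess_value_le (greedy_ge0 hgreedy i) (fun t => allocation_ge0 hy i t.+1)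
    (allocation_sum_le1 hy i) (greedy_residual_ge0 hgreedy i) T
    (val_at_ge0 a hv hrho i) (val_at_nonincreasing a hv hrho i)).
lra.
Qed.
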